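(* For every positive integer $n$, the difference graph of the cyclic group $\mathbb{Z}_n$ equals the difference graph of the dihedral group $D_{2n}$ of order $2n$, where $\mathbb{Z}_n$ is identified with the cyclic subgroup of rotations of index $2$ in $D_{2n}$.
   Context: For a finite group $G$ with identity $e$: the intersection power graph $\mathcal{G}_I(G)$ has vertex set $G$, two distinct non-identity vertices $x,y$ being adjacent iff $\langle x\rangle\cap\langle y\rangle\neq\{e\}$, and $e$ being adjacent to every other vertex. The power graph $\mathcal{P}(G)$ has vertex set $G$, two distinct vertices being adjacent iff one is a power of the other. The difference graph $\mathcal{D}(G)$ is the graph on vertex set $G$ with edge set $E(\mathcal{G}_I(G))\setminus E(\mathcal{P}(G))$, with all isolated vertices removed. *)

From mathcomp Require Import all_boot all_fingroup.
Set Implicit Arguments.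
Unset Strict Implicit.
Unset Printing Implicit Defensive.
Local Open Scope group_scope.

Section Graphs.
Variable gT : finGroupType.
Implicit Types (x y : gT) (G : {set gT}).

Definition ipg_adj x y : bool :=
  (x != y) && [|| x == 1, y == 1 | <[x]> :&: <[y]> != 1].

Definition pg_adj x y : bool :=
  (x != y) && ((x \in <[y]>) || (y \in <[x]>)).

Definition diff_adj G x y : bool :=
  [&& x \in G, y \in G, ipg_adj x y & ~~ pg_adj x y].

(* the difference graph D(G): non-isolated vertices, and its edge set
   (stored as ordered pairs, symmetric) *)
Definition diff_vertices G : {set gT} :=
  [set x in G | [exists y, diff_adj G x y]].

Definition diff_edges G : {set gT * gT} :=
  [set p | diff_adj G p.1 p.2].

Definition diff_graph G : {set gT} * {set gT * gT} :=
  (diff_vertices G, diff_edges G).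
End Graphs.

From mathcomp Require Import all_boot all_fingroup.
From mathcomp Require Import cyclic.
Local Open Scope group_scope.

(* An element x of prime order is isolated in the difference graph of any
   group: if <[x]> meets <[y]> nontrivially then <[x]> \subset <[y]>, so x is a
   power of y.  Every element of D_2n outside the rotation subgroup is a
   reflection of order 2, hence isolated; and adjacency between two rotations
   does not depend on the ambient group. *)

Section DifferenceGraph.
Variable gT : finGroupType.
Implicit Types (x y : gT) (G H : {set gT}).

Lemma ipg_adjC x y : ipg_adj x y = ipg_adj y x.
Proof. by rewrite /ipg_adj eq_sym setIC orbA [(x == 1) || _]orbC -orbA. Qed.

Lemma pg_adjC x y : pg_adj x y = pg_adj y x.
Proof. by rewrite /pg_adj eq_sym orbC. Qed.

Lemma diff_adjC G x y : diff_adj G x y = diff_adj G y x.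
Proof. by rewrite /diff_adj ipg_adjC pg_adjC andbA [(x \in G) && _]andbC -andbA. Qed.

Lemma pg_adj_prime_order x y : prime #[x] -> ipg_adj x y -> pg_adj x y.
Proof.
move=> px /andP[neq_xy]; rewrite /pg_adj neq_xy /=.
case/or3P => [/eqP x1 | /eqP -> | nt_meet].
- by rewrite x1 order1 in px.
- by rewrite group1 orbT.
- by rewrite -cycle_subG (prime_meetG px nt_meet).
Qed.

Lemma diff_adj_prime_order G x y : prime #[x] -> diff_adj G x y = false.
Proof. by move=> px; apply/and4P => [[_ _ /(pg_adj_prime_order _ _ px) ->]]. Qed.

Lemma diff_verticesE G : diff_vertices G = [set x | [exists y, diff_adj G x y]].
Proof. by apply/setP => x; rewrite !inE; apply/andb_idl => /existsP[y /and3P[]]. Qed.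

Section PrimeOrderComplement.
Variables G H : {set gT}.
Hypothesis sHG : H \subset G.
Hypothesis prime_compl : {in G :\: H, forall x, prime #[x]}.

Lemma diff_adj_prime_compl : diff_adj H =2 diff_adj G.
Proof.
have outH z w : z \notin H -> diff_adj G z w = false.
  move=> Hz; case Gz: (z \in G); last by rewrite /diff_adj Gz.
  by apply: diff_adj_prime_order; apply: prime_compl; rewrite inE Hz Gz.
move=> x y; have [Hx|Hx] := boolP (x \in H); last first.
  by rewrite outH // /diff_adj (negbTE Hx).
have [Hy|Hy] := boolP (y \in H); last first.
  by rewrite [diff_adj G _ _]diff_adjC outH // /diff_adj (negbTE Hy) andbF.
by rewrite /diff_adj Hx Hy !(subsetP sHG).
Qed.

Lemma diff_graph_prime_compl : diff_graph H = diff_graph G.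
Proof.
rewrite /diff_graph !diff_verticesE /diff_edges.
by congr pair; apply/setP => x; rewrite !inE ?diff_adj_prime_compl //;
  apply: eq_existsb => y; rewrite diff_adj_prime_compl.
Qed.

End PrimeOrderComplement.

Section Dihedral.
Variables r t : gT.
Hypotheses (ot : #[t] = 2) (tNr : t \notin <[r]>) (rt : r ^ t = r^-1).

Lemma dihedral_conj_rot x : x \in <[r]> -> x ^ t = x^-1.
Proof. by case/cycleP => i ->; rewrite conjXg rt expgVn. Qed.

Lemma order_dihedral_reflection x : x \in <[r]> -> #[x * t] = 2.
Proof.
move=> Rx; have tV : t^-1 = t by rewrite invg_expg ot.
have xtC : x * t = t * x^-1 by rewrite conjgC dihedral_conj_rot.
have sq : (x * t) ^+ 2 = 1 by rewrite expgS expg1 {2}xtC -{2}tV -invMg mulgV.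
have xt1 : x * t != 1.
  by apply: contra tNr; rewrite -eq_invg_mul => /eqP <-; rewrite groupV.
by apply/prime_nt_dvdP; rewrite ?order_eq1 ?order_dvdn ?sq.
Qed.

Lemma prime_order_dihedral_compl : {in <[r]> * <[t]> :\: <[r]>, forall x, prime #[x]}.
Proof.
move=> _ /setDP[/mulsgP[x z Rx tz ->] Rxz].
rewrite cycle2g // !inE in tz; case/pred2P: tz Rxz => -> Rxz.
  by rewrite mulg1 Rx in Rxz.
by rewrite order_dihedral_reflection.
Qed.

End Dihedral.

End DifferenceGraph.

Theorem lemma8p1 (gT : finGroupType) (n : nat) (G : {group gT}) (r t : gT) :
  0 < n ->
  #[r] = n -> #[t] = 2 -> t \notin <[r]> -> r ^ t = r^-1 ->
  G = (<[r]> <*> <[t]>)%G ->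
  diff_graph <[r]> = diff_graph G.
Proof.
move=> _ _ ot tNr rt ->.
have nRT : <[t]> \subset 'N(<[r]>) by rewrite cycle_subG inE -cycleJ rt cycleV.
rewrite /= norm_joinEr //; apply: diff_graph_prime_compl; first exact: mulG_subl.
exact: prime_order_dihedral_compl.
Qed.
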